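(* Let $M\ge1$, let $k\in\{0\}\times\mathbb{Z}_+^M$ and let $m\in\mathbb{Z}^{M+1}$ with $0\leq m\leq\min\{k,\tilde{k}\}$. Then \[ \#\left\{\mathsf{p}\in\mathsf{S}_M^\prime\,|\,(\kappa^\prime(\mathsf{p}),\beta^\prime(\mathsf{p}))=(k,m)\right\}=\binom{k}{m}\binom{\tilde{k}}{m}. \]
   Context: Fix depths $z_{-1}<z_0<\cdots<z_M<z_{M+1}$; $\mathbb{Z}_+$ denotes the nonnegative integers. A transmission scattering sequence is a finite sequence $\mathsf{p}=(\mathsf{p}_0,\ldots,\mathsf{p}_L)$ with $\mathsf{p}_0=z_{-1}$, $\mathsf{p}_L=z_{M+1}$, $\mathsf{p}_i\in\{z_0,\ldots,z_M\}$ for $1\le i\le L-1$, and for every $0\le i\le L-1$ there is $-1\le j\le M$ with $\{\mathsf{p}_i,\mathsf{p}_{i+1}\}=\{z_j,z_{j+1}\}$; $\mathsf{S}_M^\prime$ is the set of these. For $0\le n\le M$, consider the maximal runs of consecutive indices $i$ with $\mathsf{p}_i\in\{z_n,\ldots,z_{M+1}\}$; the last one (containing index $L$) is the trunk run. $k_n$ is the number of non-trunk runs and $m_n$ the number of non-trunk runs of length at least 2; $\kappa^\prime(\mathsf{p})=(k_0,\ldots,k_M)$, $\beta^\prime(\mathsf{p})=(m_0,\ldots,m_M)$. Notation: $\tilde{k}=(k_1,\ldots,k_M,0)$; $\min$ and $\le$ entrywise; $0$ the zero vector; $\binom{x}{y}=\prod_{n=0}^M\binom{x_n}{y_n}$.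 *)

From mathcomp Require Import all_boot.
Set Implicit Arguments. Unset Strict Implicit. Unset Printing Implicit Defensive.

(* Encoding: depth z_j (-1 <= j <= M+1) is encoded by the natural number j+1,
   so z_{-1} ~ 0, z_0 ~ 1, ..., z_M ~ M+1, z_{M+1} ~ M+2.
   A scattering sequence p = (p_0,...,p_L) is a seq nat of these codes. *)

(* {p_i, p_{i+1}} = {z_j, z_{j+1}} for some j : codes differ by exactly one *)
Definition adj (a b : nat) : bool := (a.+1 == b) || (b.+1 == a).

Definition is_tss (M : nat) (p : seq nat) : bool :=
  match p with
  | [::] => false
  | x :: s =>
      [&& x == 0,
          last x s == M.+2,
          all (fun i => (1 <= nth 0 p i <= M.+1)%N) (iota 1 (size p - 2))
        & path adj x s]
  end.

Fixpoint runs_acc (cur : nat) (b : seq bool) : seq nat :=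
  match b with
  | [::] => if (0 < cur)%N then [:: cur] else [::]
  | true :: b' => runs_acc cur.+1 b'
  | false :: b' => if (0 < cur)%N then cur :: runs_acc 0 b' else runs_acc 0 b'
  end.

Definition runs (b : seq bool) : seq nat := runs_acc 0 b.

(* lengths of the non-trunk runs: drop the run containing the last index
   (which is the last run when the last entry is [true]) *)
Definition nontrunk_runs (b : seq bool) : seq nat :=
  let r := runs b in
  if last false b then take (size r).-1 r else r.

(* indicator of p_i \in {z_n, ..., z_{M+1}}, i.e. code >= n+1 *)
Definition above (n : nat) (p : seq nat) : seq bool := [seq (n.+1 <= x)%N | x <- p].

Definition kappa_n (n : nat) (p : seq nat) : nat := size (nontrunk_runs (above n p)).
Definition beta_n (n : nat) (p : seq nat) : nat :=
  count (fun l => 2 <= l)%N (nontrunk_runs (above n p)).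

(* k tilde = (k_1, ..., k_M, 0) *)
Definition ktilde (M : nat) (k : 'I_M.+1 -> nat) (n : 'I_M.+1) : nat :=
  match (n.+1 < M.+1)%N as b return (n.+1 < M.+1)%N = b -> nat with
  | true => fun h => k (Ordinal h)
  | false => fun _ => 0
  end erefl.

From mathcomp Require Import all_boot zify.
Set Implicit Arguments. Unset Strict Implicit. Unset Printing Implicit Defensive.

(* With depths encoded by codes, a non-trunk run of the codes >= n+1 ends with a
   step n+1 -> n, and it has length at least 2 exactly when that step is
   preceded by a step n+2 -> n+1; so k_n and m_n count descents and "long"
   descents across level n.  Write p = 0 :: q ++ [:: M+2]; the interior q climbs
   from 0 to the deepest level a = M+1.  The interiors for depth M+1 arise
   uniquely from those for depth M by inserting, after the i-th visit of a
   (there are k_M + 1 visits), c_i spikes a+1, a, and appending a+1.  This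
   leaves k_n, m_n unchanged for n < M, makes k_{M+1} = sum c_i, forces
   m_{M+1} = 0, and turns m_M into the number of nonzero c_i with i <= k_M
   (each precedes a descent a -> a-1).  There are binom(k_M, m_M)
   binom(k_{M+1}, m_M) such compositions c, and induction on M gives the
   product formula. *)

Definition nontrunk_runs_acc (cur : nat) (b : seq bool) : seq nat :=
  let r := runs_acc cur b in if last (0 < cur) b then take (size r).-1 r else r.

Lemma runs_acc_neq0 cur b : last (0 < cur) b -> runs_acc cur b != [::].
Proof.
elim: b cur => [|[] b IH] cur /=; first by case: cur.
  by move/(IH cur.+1).
by move=> /(IH 0) h; case: ifP.
Qed.

Lemma nontrunk_runs_acc_nil cur : nontrunk_runs_acc cur [::] = [::].
Proof. by rewrite /nontrunk_runs_acc /=; case: cur. Qed.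

Lemma nontrunk_runs_acc_true cur b :
  nontrunk_runs_acc cur (true :: b) = nontrunk_runs_acc cur.+1 b.
Proof. by []. Qed.

Lemma nontrunk_runs_acc_false cur b :
  nontrunk_runs_acc cur (false :: b) =
  if 0 < cur then cur :: nontrunk_runs_acc 0 b else nontrunk_runs_acc 0 b.
Proof.
rewrite /nontrunk_runs_acc /=; case: cur => [|cur] //=.
by case: ifP => // /(@runs_acc_neq0 0); case: (runs_acc 0 b).
Qed.

Fixpoint descents (n x : nat) (s : seq nat) : nat :=
  if s is y :: s' then ((x == n.+1) && (y == n)) + descents n y s' else 0.

(* The flag b records whether the element preceding x is n+2. *)
Fixpoint long_descents (n : nat) (b : bool) (x : nat) (s : seq nat) : nat :=
  if s is y :: s' then [&& b, x == n.+1 & y == n] + long_descents n (x == n.+2) y s'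
  else 0.

Lemma size_nontrunk_runs_above n x s cur :
  path adj x s -> (0 < cur) = (n < x) ->
  size (nontrunk_runs_acc cur (above n s)) = descents n x s.
Proof.
elim: s x cur => [|y s IH] x cur /=; first by rewrite nontrunk_runs_acc_nil.
case/andP=> /orP[]/eqP exy ys hcur; case hy: (n < y).
all: rewrite ?nontrunk_runs_acc_true ?nontrunk_runs_acc_false.
all: try case: ifP => hc /=.
all: rewrite ?(IH y cur.+1) ?(IH y 0) //; lia.
Qed.

Lemma count_nontrunk_runs_above n b x s cur :
  path adj x s -> (0 < cur) = (n < x) -> (1 < cur) && (x == n.+1) = b && (x == n.+1) ->
  count (leq 2) (nontrunk_runs_acc cur (above n s)) = long_descents n b x s.
Proof.
elim: s b x cur => [|y s IH] b x cur /=; first by rewrite nontrunk_runs_acc_nil.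
case/andP=> /orP[]/eqP exy ys hcur hb; case hy: (n < y).
all: rewrite ?nontrunk_runs_acc_true ?nontrunk_runs_acc_false.
all: try case: ifP => hc /=.
all: rewrite ?(IH (x == n.+2) y cur.+1) ?(IH (x == n.+2) y 0) //; lia.
Qed.

Lemma nontrunk_runsE b : nontrunk_runs b = nontrunk_runs_acc 0 b.
Proof. by []. Qed.

Lemma kappa_nE n x s : path adj x s -> kappa_n n (x :: s) = descents n x s.
Proof.
move=> xs; rewrite /kappa_n nontrunk_runsE /=.
by case: ltnP => hx; rewrite ?nontrunk_runs_acc_true ?nontrunk_runs_acc_false
  (size_nontrunk_runs_above xs) //; lia.
Qed.

Lemma beta_nE n x s : path adj x s -> beta_n n (x :: s) = long_descents n false x s.
Proof.
move=> xs; rewrite /beta_n nontrunk_runsE /=.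
by case: ltnP => hx; rewrite ?nontrunk_runs_acc_true ?nontrunk_runs_acc_false
  (count_nontrunk_runs_above (b := false) xs) //; lia.
Qed.

Lemma descents_cat n x s1 s2 :
  descents n x (s1 ++ s2) = descents n x s1 + descents n (last x s1) s2.
Proof. by elim: s1 x => [|y s1 IH] x //=; rewrite IH addnA. Qed.

Lemma descents_rcons n x s z : z != n -> descents n x (rcons s z) = descents n x s.
Proof. by move=> zn; rewrite -cats1 descents_cat /= (negbTE zn) andbF /= !addn0. Qed.

Lemma descents_eq0 n x s : n.+1 \notin x :: s -> descents n x s = 0.
Proof.
elim: s x => [|y s IH] x //=; rewrite !inE negb_or => /andP[nx nys].
by rewrite eq_sym (negbTE nx) IH.
Qed.

Fixpoint long_descents_flag n (b : bool) (x : nat) (s : seq nat) : bool :=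
  if s is y :: s' then long_descents_flag n (x == n.+2) y s' else b.

Lemma long_descents_cat n b x s1 s2 :
  long_descents n b x (s1 ++ s2) =
  long_descents n b x s1 + long_descents n (long_descents_flag n b x s1) (last x s1) s2.
Proof. by elim: s1 b x => [|y s1 IH] b x //=; rewrite IH addnA. Qed.

Lemma long_descents_rcons n b x s z :
  z != n -> long_descents n b x (rcons s z) = long_descents n b x s.
Proof. by move=> zn; rewrite -cats1 long_descents_cat /= (negbTE zn) !andbF /= !addn0. Qed.

Lemma long_descents_eq0 n b x s : ~~ b -> n.+2 \notin x :: s -> long_descents n b x s = 0.
Proof.
elim: s b x => [|y s IH] b x //= nb; rewrite !inE negb_or => /andP[nx nys].
by rewrite (negbTE nb) IH // eq_sym.
Qed.

Section Spikes.
Variable a : nat.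

Definition spikes k := flatten (nseq k [:: a.+1; a]).

Fixpoint insert_spikes (c s : seq nat) : seq nat :=
  if s is y :: s' then
    if y == a then y :: spikes (head 0 c) ++ insert_spikes (behead c) s'
    else y :: insert_spikes c s'
  else [::].

(* The long descents a+1, a, a-1 created by the spikes. *)
Fixpoint spiked_descents (c s : seq nat) : nat :=
  if s is y :: s' then
    if y == a then ((0 < head 0 c) && (head a.+1 s' == a.-1)) + spiked_descents (behead c) s'
    else spiked_descents c s'
  else 0.

Lemma last_spikes k : last a (spikes k) = a.
Proof. by elim: k. Qed.

Lemma path_spikes k : path adj a (spikes k).
Proof. by elim: k => //= k ->; rewrite /adj !eqxx orbT. Qed.

Lemma mem_spikes x k : x \in spikes k -> (x == a) || (x == a.+1).
Proof. by elim: k => //= k IH; rewrite !inE => /or3P[->|->|/IH]; rewrite ?orbT. Qed.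

Lemma descents_spikes n k : descents n a (spikes k) = k * (n == a).
Proof.
elim: k => //= k ->; rewrite eqSS [n == a]eq_sym.
by case: eqP => [->|_] /=; rewrite ?andbF; lia.
Qed.

Lemma long_descents_spikes n b k : long_descents n b a (spikes k) = 0.
Proof.
by elim: k b => //= k IH b; rewrite IH !eqSS; case: eqP => [->|_]; rewrite ?andbF //=; lia.
Qed.

Lemma long_descents_flag_spikes n k :
  long_descents_flag n (a.+1 == n.+2) a (spikes k) = (a.+1 == n.+2).
Proof. by elim: k. Qed.

Lemma head_insert_spikes w c s : head w (insert_spikes c s) = head w s.
Proof. by case: s => //= y s; case: ifP. Qed.

Lemma last_insert_spikes x c s : last x (insert_spikes c s) = last x s.
Proof.
elim: s x c => //= y s IH x c; case: ifP => [/eqP ->|_] /=; last exact: IH.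
by rewrite last_cat last_spikes IH.
Qed.

Lemma path_insert_spikes x c s : path adj x (insert_spikes c s) = path adj x s.
Proof.
elim: s x c => //= y s IH x c; case: ifP => [/eqP ->|_] /=; last by rewrite IH.
by rewrite cat_path path_spikes last_spikes IH.
Qed.

Lemma mem_insert_spikes c s x : x \in s -> x \in insert_spikes c s.
Proof.
elim: s c => //= y s IH c; rewrite inE => /orP[/eqP ->|xs].
  by case: ifP; rewrite inE eqxx.
by case: ifP => _; rewrite inE ?mem_cat IH ?orbT.
Qed.

Lemma all_insert_spikes (P : pred nat) c s :
  P a.+1 -> all P (insert_spikes c s) = all P s.
Proof.
move=> Pa; apply/allP/allP => [Ps x /(mem_insert_spikes c) /Ps //|Ps x].
elim: s c Ps => //= y s IH c Ps.
have {}IH c' : x \in insert_spikes c' s -> P x.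
  by apply: IH => z zs; apply: Ps; rewrite inE zs orbT.
have Py : P y by apply: Ps; rewrite mem_head.
case: ifP => [/eqP ey|_]; rewrite inE => /orP[/eqP ->|] //; last exact: IH.
by rewrite mem_cat => /orP[/mem_spikes/orP[]/eqP ->|/IH]; rewrite // -ey.
Qed.

Lemma descents_insert_spikes n x c s :
  descents n x (insert_spikes c s) = descents n x s + (n == a) * sumn (take (count_mem a s) c).
Proof.
elim: s x c => [|y s IH] x c /=; first by rewrite take0 muln0.
case: ifP => [/eqP ey|ny] /=; last by rewrite IH add0n addnA.
rewrite ey descents_cat descents_spikes last_spikes IH add1n.
by case: c => [|c0 c] /=; nia.
Qed.

Lemma long_descents_insert_spikes n b x c s : all (leq^~ a) s -> x <= a ->
  long_descents n b x (insert_spikes c s) =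
  long_descents n b x s + (n.+1 == a) * spiked_descents c s.
Proof.
elim: s b x c => [|y s IH] b x c /=; first by rewrite muln0.
case/andP=> ya sa xa; case: ifP => [/eqP ey|ny] /=; last by rewrite IH // addnA.
rewrite ey long_descents_cat long_descents_spikes add0n last_spikes IH //.
rewrite mulnDr !addnA; congr (_ + _); rewrite -!addnA; congr (_ + _).
case: c => [|[|c0] c] /=; rewrite ?muln0 ?addn0 // long_descents_flag_spikes.
by case: s {IH sa} => [|z s] /=; nia.
Qed.

Lemma spikes_inj i j u v : spikes i ++ u = spikes j ++ v ->
  head 0 u != a.+1 -> head 0 v != a.+1 -> i = j /\ u = v.
Proof.
elim: i j => [|i IH] [|j] //=; first by move=> -> /negP.
  by move=> <- _ /negP.
by case=> /IH h /h /[apply] [[-> ->]].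
Qed.

Lemma head_insert_spikes_neq c s : all (leq^~ a) s -> head 0 (insert_spikes c s) != a.+1.
Proof. by rewrite head_insert_spikes; case: s => //= x s /andP[xa _]; apply/eqP; lia. Qed.

Lemma insert_spikes_inj s1 s2 c1 c2 : all (leq^~ a) s1 -> all (leq^~ a) s2 ->
  size c1 = count_mem a s1 -> size c2 = count_mem a s2 ->
  insert_spikes c1 s1 = insert_spikes c2 s2 -> c1 = c2 /\ s1 = s2.
Proof.
elim: s1 s2 c1 c2 => [|x s1 IH] [|y s2] c1 c2.
- by move=> _ _; case: c1 => //; case: c2.
- by move=> _ _ _ _ /=; case: ifP.
- by move=> _ _ _ _ /=; case: ifP.
move=> /andP[_ s1a] /andP[_ s2a] hc1 hc2 e.
have exy : x = y by have := congr1 (head 0) e; rewrite !head_insert_spikes.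
move: e hc1 hc2; rewrite -exy /=; case: (x =P a) => [->|_] /= [e] hc1 hc2.
- case: c1 e hc1 => [|d1 c1] //=; case: c2 hc2 => [|d2 c2] //= [hc2] e [hc1].
  have [-> e'] := spikes_inj e (head_insert_spikes_neq c1 s1a) (head_insert_spikes_neq c2 s2a).
  by have [-> ->] := IH _ _ _ s1a s2a hc1 hc2 e'.
- by have [-> ->] := IH _ _ _ s1a s2a hc1 hc2 e.
Qed.

End Spikes.

Section SpikeDecomposition.
Variable a : nat.
Hypothesis a_gt0 : 0 < a.

Lemma spiked_descents_count y c s :
  path adj y s -> all (leq^~ a) s -> last y s = a -> s != [::] ->
  spiked_descents a c s = count (leq 1) (take (count_mem a s).-1 c).
Proof.
elim: s y c => //= z s IH y c /andP[_ zs] /andP[za sa] ls _.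
case: s IH zs sa ls => [|w s] IH zs sa ls.
  move: ls => /= ->; rewrite eqxx take0 /= (_ : (a.+1 == a.-1) = false) ?andbF //.
  by apply/eqP; lia.
have a_in : 0 < count_mem a (w :: s) by rewrite -has_count has_pred1 -ls /= mem_last.
case: eqP => [ez|_]; rewrite (IH z) //.
have -> : (w == a.-1) = true.
  by move: zs => /= /andP[/orP[]/eqP]; move: sa => /= /andP[wa _]; rewrite ez; lia.
by rewrite andbT add1n; case: (count_mem a _) a_in => // k _; case: c.
Qed.

Lemma count_mem_descents y s :
  path adj y s -> all (leq^~ a) s -> y <= a -> last y s = a ->
  count_mem a (y :: s) = (descents a.-1 y s).+1.
Proof.
elim: s y => [|z s IH] y /=; first by move=> _ _ _ ->; rewrite eqxx.
case/andP=> yz zs /andP[za sa] ya ls; have /= -> := IH z zs sa za ls.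
case: (y =P a) => [ey|ny].
  have -> : z = a.-1 by move: yz; rewrite ey => /orP[]/eqP; lia.
  by rewrite ey prednK // !eqxx.
by rewrite add0n (_ : (y == a.-1.+1) = false) //; apply/eqP; lia.
Qed.

Lemma insert_spikesP y s : y <= a -> path adj y s -> all (leq^~ a.+1) s -> last y s <= a ->
  exists q c, [/\ y :: s = insert_spikes a c q, all (leq^~ a) q & size c = count_mem a q].
Proof.
have base z : z <= a -> exists q c,
    [/\ [:: z] = insert_spikes a c q, all (leq^~ a) q & size c = count_mem a q].
  by exists [:: z], (if z == a then [:: 0] else [::]); rewrite /= andbT; case: (z == a).
elim: {s}(size s) {-2}s (leqnn (size s)) y => [|N IH] [|y' s] //= sN y ya.
- by move=> *; apply: base.
- by move=> *; apply: base.
case/andP=> yy' y's /andP[y'a sa] ls.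
case: (y' =P a.+1) => [ey'|ny'].
- have ey : y = a by move: yy'; rewrite ey' => /orP[]/eqP; lia.
  case: s sN y's sa ls => [|z s] /= sN y's sa ls; first by move: ls => /=; lia.
  move: y's sa => /= /andP[y'z zs] /andP[za sa].
  have ez : z = a by move: y'z; rewrite ey' => /orP[]/eqP; lia.
  rewrite ez in zs ls.
  have [[|x q] [c [e qa hc]]] := IH s (ltnW sN) a (leqnn a) zs sa ls; first by [].
  have ex : x = a by have := congr1 (head 0) e; rewrite head_insert_spikes.
  move: e hc qa; rewrite ex /= eqxx add1n => -[e] + qa.
  case: c e => [//|c0 c] /= e [hc].
  exists (a :: q), (c0.+1 :: c); split => //=; last by rewrite eqxx add1n hc.
  by rewrite eqxx ey ey' ez e.
- have [q [c [e qa hc]]] := IH s sN y' ltac:(lia) y's sa ls.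
  exists (y :: q), (if y == a then 0 :: c else c); rewrite /= ya qa.
  by split => //; case: (y == a); rewrite /= -?e ?hc.
Qed.

End SpikeDecomposition.

Fixpoint compositions (n K m : nat) : seq (seq nat) :=
  if n is n'.+1 then
    [seq 0 :: c | c <- compositions n' K m] ++
    (if m is m'.+1 then
       [seq j.+1 :: c | j <- iota 0 K, c <- compositions n' (K - j.+1) m']
     else [::])
  else if m == 0 then [:: [:: K]] else [::].

Lemma mem_compositions n K m c : c \in compositions n K m <->
  [/\ size c = n.+1, sumn c = K & count (leq 1) (take n c) = m].
Proof.
elim: n K m c => [|n IH] K m c /=.
  case: (m =P 0) => [->|nm]; rewrite ?inE; split => //.
  - by move/eqP->; split => /=; rewrite ?addn0.
  - by case=> + + _; case: c => [|x [|y c]] //= _; rewrite addn0 => ->.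
  - by case=> _ _; rewrite take0 /= => /esym.
rewrite mem_cat; split.
  case/orP=> [/mapP[c' /IH[h1 h2 h3] ->]|]; first by rewrite /= h1 h2 h3.
  case: m => [|m] //; case/allpairsPdep=> j [c' [+ /IH[h1 h2 h3] ->]].
  by rewrite mem_iota /= h1 h3 => jK; split => //; lia.
case=> + h2 h3; case: c h2 h3 => [|[|j] c] //= h2 h3 [h1].
  by apply/orP; left; apply/mapP; exists c => //; apply/IH.
apply/orP; right; case: m h3 => [|m] //= [h3].
apply/allpairsPdep; exists j, c; rewrite mem_iota; split => //; first lia.
by apply/IH; split => //; lia.
Qed.

Lemma uniq_compositions n K m : uniq (compositions n K m).
Proof.
elim: n K m => [|n IH] K m /=; first by case: (m == 0).
rewrite cat_uniq map_inj_uniq ?IH //; last by move=> x y [].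
case: m => [|m] //=; rewrite allpairs_uniq_dep ?iota_uniq ?andbT //.
- by apply/hasPn => _ /allpairsPdep[j [c [_ _ ->]]]; apply/mapP => -[].
- by move=> [j1 c1] [j2 c2] _ _ [-> ->].
Qed.

Lemma sum_bin_sub K m : \sum_(j <- iota 0 K) 'C(K - j.+1, m) = 'C(K, m.+1).
Proof.
elim: K => [|K IH]; first by rewrite big_nil.
rewrite /= big_cons subSS subn0 -[1]/(1 + 0) iotaDl big_map.
by under eq_bigr do rewrite add1n subSS; rewrite IH binS addnC.
Qed.

Lemma size_compositions n K m : size (compositions n K m) = 'C(n, m) * 'C(K, m).
Proof.
elim: n K m => [|n IH] K m /=; first by case: m => [|m]; rewrite ?bin0.
rewrite size_cat size_map IH; case: m => [|m]; first by rewrite !bin0 addn0.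
rewrite size_allpairs_dep sumnE big_map.
under eq_bigr do rewrite IH.
by rewrite -big_distrr sum_bin_sub binS mulnDl.
Qed.

Definition tss_interior (a : nat) (q : seq nat) : bool :=
  [&& all (fun x => 0 < x <= a) q, path adj 0 q & last 0 q == a].

Lemma all_nth_iota_rcons (P : pred nat) q z :
  all (fun i => P (nth 0 (0 :: rcons q z) i)) (iota 1 (size q)) = all P q.
Proof.
rewrite -[1]/(1 + 0) iotaDl all_map -[in RHS](mkseq_nth 0 q) all_map.
by apply: eq_in_all => i; rewrite mem_iota /= nth_rcons => ->.
Qed.

Lemma is_tssE M p : is_tss M p <-> exists2 q, p = 0 :: rcons q M.+2 & tss_interior M.+1 q.
Proof.
have allE := all_nth_iota_rcons (fun x => 0 < x <= M.+1).
split=> [|[q -> /and3P[qa q0 /eqP lq]]]; last first.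
  rewrite /= last_rcons eqxx size_rcons !subSS subn0 allE qa /=.
  by rewrite rcons_path q0 lq /adj eqxx.
case: p => [|x s] //= /and4P[/eqP -> ls].
case/lastP: s ls => [|q z]; first by rewrite eq_sym.
rewrite last_rcons size_rcons !subSS subn0 allE => /eqP -> qa.
rewrite rcons_path => /andP[q0 lq]; exists q => //; rewrite /tss_interior qa q0 /=.
have : last 0 q \in 0 :: q by exact: mem_last.
rewrite inE => /orP[/eqP e|/(allP qa) /andP[_ h]]; move: lq; rewrite /adj; first by rewrite e.
by case/orP=> /eqP e; apply/eqP; lia.
Qed.

Definition spike_lift (a : nat) (c q : seq nat) : seq nat := rcons (insert_spikes a c q) a.+1.

Section SpikeLift.
Variable a : nat.

Lemma tss_interior_le q : tss_interior a q -> all (leq^~ a) q.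
Proof. by case/and3P=> /sub_all-> // x /andP[]. Qed.

Lemma tss_interior_spike_lift c q : tss_interior a q -> tss_interior a.+1 (spike_lift a c q).
Proof.
case/and3P=> qa q0 /eqP lq; rewrite /tss_interior /spike_lift last_rcons eqxx andbT.
rewrite all_rcons all_insert_spikes ?ltnSn //= rcons_path path_insert_spikes q0.
rewrite last_insert_spikes lq /adj eqxx andbT; apply: sub_all qa => x /andP[-> /=].
exact: leqW.
Qed.

Lemma descents_spike_lift n c q : n <= a ->
  descents n 0 (spike_lift a c q) = descents n 0 q + (n == a) * sumn (take (count_mem a q) c).
Proof. by move=> na; rewrite descents_rcons ?descents_insert_spikes //; apply/eqP; lia. Qed.

Lemma long_descents_spike_lift n c q : n <= a -> all (leq^~ a) q ->
  long_descents n false 0 (spike_lift a c q) =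
  long_descents n false 0 q + (n.+1 == a) * spiked_descents a c q.
Proof.
move=> na qa; rewrite long_descents_rcons ?long_descents_insert_spikes //.
by apply/eqP; lia.
Qed.

Lemma descents_tss_interior q : tss_interior a q -> descents a 0 q = 0.
Proof.
move/tss_interior_le/allP=> qa; apply: descents_eq0; rewrite inE negb_or.
by apply/andP; split; [|apply/negP => /qa]; rewrite ?ltnn.
Qed.

Lemma long_descents_tss_interior n q : a <= n.+1 -> tss_interior a q ->
  long_descents n false 0 q = 0.
Proof.
move=> an /tss_interior_le/allP qa; apply: long_descents_eq0 => //; rewrite inE negb_or.
by apply/andP; split; [|apply/negP => /qa]; lia.
Qed.

Lemma spike_lift_inj q1 q2 c1 c2 : tss_interior a q1 -> tss_interior a q2 ->
  size c1 = count_mem a q1 -> size c2 = count_mem a q2 ->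
  spike_lift a c1 q1 = spike_lift a c2 q2 -> c1 = c2 /\ q1 = q2.
Proof.
move=> q1a q2a hc1 hc2 e.
apply: insert_spikes_inj (tss_interior_le q1a) (tss_interior_le q2a) hc1 hc2 _.
exact: rcons_injl e.
Qed.

Hypothesis a_gt0 : 0 < a.

Lemma tss_interior_neq0 q : tss_interior a q -> q != [::].
Proof. by case: q => //= /and3P[_ _ /eqP a0]; move: a_gt0; rewrite -a0. Qed.

Lemma count_mem_tss_interior q : tss_interior a q -> count_mem a q = (descents a.-1 0 q).+1.
Proof.
move=> qa; case/and3P: (qa) => _ q0 /eqP lq.
rewrite -(count_mem_descents a_gt0 q0 (tss_interior_le qa) (leq0n a) lq) /=.
by rewrite eq_sym (gtn_eqF a_gt0).
Qed.

Lemma spike_liftP q' : tss_interior a.+1 q' ->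
  exists q c, [/\ tss_interior a q, size c = count_mem a q & q' = spike_lift a c q].
Proof.
case/and3P=> qa q0 /eqP lq; case/lastP: q' qa q0 lq => [//|r z].
rewrite all_rcons rcons_path last_rcons => /andP[_ ra] /andP[r0 rz] ez; subst z.
have lr : last 0 r = a.
  have : last 0 r \in 0 :: r by exact: mem_last.
  rewrite inE => /orP[/eqP e|/(allP ra) /andP[_ h]]; move: rz; rewrite /adj ?e.
    by case/orP=> /eqP; lia.
  by case/orP=> /eqP; lia.
have ra' : all (leq^~ a.+1) r by apply: sub_all ra => x /andP[].
have [[|y q] [c [e qa hc]]] := insert_spikesP a_gt0 (leq0n a) r0 ra' (eq_leq lr); first by [].
have ey : y = 0 by have := congr1 (head 1) e; rewrite head_insert_spikes.
move: e hc qa; rewrite ey /= eq_sym (gtn_eqF a_gt0) /= add0n => -[er] hc qa.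
have rpos : all (leq 1) q.
  by rewrite -(@all_insert_spikes a (leq 1) c q) // -er; apply: sub_all ra => x /andP[].
exists q, c; split => //; last by rewrite /spike_lift er.
rewrite /tss_interior -(path_insert_spikes a 0 c) -(last_insert_spikes a 0 c) -er r0 lr eqxx.
rewrite !andbT; apply/allP => x xq.
by rewrite (allP rpos x xq) (allP qa x xq).
Qed.

End SpikeLift.

Lemma spike_lift_stats M c q n :
  tss_interior M.+1 q -> size c = count_mem M.+1 q -> n <= M.+1 ->
  descents n 0 (spike_lift M.+1 c q) = (if n == M.+1 then sumn c else descents n 0 q) /\
  long_descents n false 0 (spike_lift M.+1 c q) =
  (if n == M then count (leq 1) (take (descents M 0 q) c) else long_descents n false 0 q).
Proof.
move=> qa hc nM; have qle := tss_interior_le qa; split.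
  rewrite descents_spike_lift // -hc take_size.
  by case: eqP => [->|_]; rewrite ?mul1n ?mul0n ?addn0 ?(descents_tss_interior qa).
rewrite long_descents_spike_lift // eqSS; case: eqP => [->|_]; last by rewrite mul0n addn0.
rewrite mul1n (@long_descents_tss_interior M.+1 M q (leqnn _) qa).
case/and3P: qa (qa) => _ q0 /eqP lq qa.
by rewrite (spiked_descents_count _ _ q0) ?(tss_interior_neq0 _ qa) // count_mem_tss_interior.
Qed.

Definition has_stats (M : nat) (K L : nat -> nat) (q : seq nat) : Prop :=
  forall n, n <= M -> descents n 0 q = K n /\ long_descents n false 0 q = L n.

Lemma spike_lift_statsP M K L c q : tss_interior M.+1 q -> size c = count_mem M.+1 q ->
  has_stats M.+1 K L (spike_lift M.+1 c q) <->
  [/\ has_stats M K (fun n => if n == M then 0 else L n) q,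
      c \in compositions (K M) (K M.+1) (L M) & L M.+1 = 0].
Proof.
move=> qa hc.
have descE n nM := (@spike_lift_stats M c q n qa hc nM).1.
have longE n nM := (@spike_lift_stats M c q n qa hc nM).2.
have cnt := count_mem_tss_interior (ltn0Sn M) qa.
have long0 := @long_descents_tss_interior M.+1 _ q _ qa.
split=> [H|[H /mem_compositions[_ sumc posc] LM1] n nM1].
  have HM := H M (leqnSn M).
  rewrite (descE M (leqnSn M)) (longE M (leqnSn M)) (ltn_eqF (ltnSn M)) eqxx in HM.
  have [HM1 HM1'] := H M.+1 (leqnn _).
  rewrite (descE M.+1 (leqnn _)) (longE M.+1 (leqnn _)) eqxx in HM1 HM1'.
  split.
  - move=> n nM; have [h1 h2] := H n (leqW nM).
    rewrite (descE n (leqW nM)) (longE n (leqW nM)) ltn_eqF // in h1 h2.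
    by case: eqP h2 => [-> _|_ ->]; rewrite ?long0 ?(proj1 HM) ?h1.
  - by apply mem_compositions; rewrite hc cnt -(proj2 HM) (proj1 HM) -HM1.
  - by rewrite -HM1' (gtn_eqF (ltnSn M)) long0.
rewrite (descE n nM1) (longE n nM1); case: (ltngtP n M.+1) nM1 => // [nM _|-> _]; last first.
  by rewrite ?eqxx (gtn_eqF (ltnSn M)) long0.
have [h1 h2] := H n nM.
split=> //; case: eqP h1 h2 => [-> h1 _|_ _ ->] //.
by rewrite h1 posc.
Qed.

Lemma tss_interior1 q : tss_interior 1 q -> q = [:: 1].
Proof.
case: q => [|x q] //= /and3P[/andP[/andP[x0 x1] qa] /andP[_ xq] _].
have -> : x = 1 by lia.
case: q qa xq => [|y q] //= /andP[/andP[y0 y1] _] /andP[/orP[]/eqP ? _]; lia.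
Qed.

Fixpoint tss_interiors (M : nat) (K L : nat -> nat) : seq (seq nat) :=
  if M is M'.+1 then
    if L M == 0 then
      [seq spike_lift M c q | q <- tss_interiors M' K (fun n => if n == M' then 0 else L n),
                              c <- compositions (K M') (K M) (L M')]
    else [::]
  else if L 0 == 0 then [:: [:: 1]] else [::].

Lemma mem_tss_interiors M K L q : K 0 = 0 ->
  q \in tss_interiors M K L <-> tss_interior M.+1 q /\ has_stats M K L q.
Proof.
elim: M L q => [|M IH] L q K0 /=.
  split=> [|[/tss_interior1 -> /(_ 0 (leqnn 0))[_ <-]]]; last by rewrite inE.
  case: eqP => // L0; rewrite inE => /eqP ->; split=> // n; rewrite leqn0 => /eqP ->.
  by rewrite K0 L0.
case: eqP => [L0|LM1]; last first.
  split=> // -[qa /(_ M.+1 (leqnn _))[_]].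
  by rewrite (long_descents_tss_interior (leqnn _) qa) => /esym.
split.
  case/allpairsP=> [[q' c] /= [/IH[//|q'a q'st] cC ->]].
  split; first exact: tss_interior_spike_lift.
  apply/spike_lift_statsP => //.
  case/mem_compositions: cC => -> _ _.
  by rewrite count_mem_tss_interior // (q'st M (leqnn M)).1.
case=> /spike_liftP[// | q' [c [q'a hc ->]]] /(spike_lift_statsP _ _ q'a hc)[q'st cC _].
by apply/allpairsP; exists (q', c); split => //; apply/IH.
Qed.

Lemma uniq_tss_interiors M K L : K 0 = 0 -> uniq (tss_interiors M K L).
Proof.
elim: M L => [|M IH] L K0 /=; first by case: (L 0 == 0).
case: (L M.+1 == 0) => //; rewrite allpairs_uniq ?uniq_compositions ?IH //.
have size_c q c : q \in tss_interiors M K (fun n => if n == M then 0 else L n) ->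
    c \in compositions (K M) (K M.+1) (L M) -> size c = count_mem M.+1 q.
  case/mem_tss_interiors=> // qa /(_ M (leqnn M))[qM _] /mem_compositions[-> _ _].
  by rewrite count_mem_tss_interior // qM.
move=> [q1 c1] [q2 c2] /allpairsP[[q1' c1'] /= [q1s c1C [-> ->]]].
move=> /allpairsP[[q2' c2'] /= [q2s c2C [-> ->]]].
case/spike_lift_inj; [| |exact: size_c|exact: size_c|by move=> -> ->].
- by case/mem_tss_interiors: q1s.
- by case/mem_tss_interiors: q2s.
Qed.

Lemma size_tss_interiors M K L : size (tss_interiors M K L) =
  \prod_(i < M.+1) ('C(K i, L i) * 'C(if i < M then K i.+1 else 0, L i)).
Proof.
elim: M L => [|M IH] L /=.
  by rewrite big_ord1 bin0n; case: eqP => [->|] /=; rewrite ?bin0 ?muln0.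
rewrite [RHS]big_ord_recr /= ltnn bin0n; case: eqP => [L0|_] /=; last by rewrite !muln0.
rewrite L0 muln1 size_allpairs IH size_compositions big_ord_recr [in RHS]big_ord_recr /=.
rewrite eqxx ltnSn !bin0 !muln1; congr (_ * _); apply: eq_bigr => i _.
by rewrite ltn_eqF // (ltn_ord i) ltnS ltnW.
Qed.

Lemma kappa_beta_tss M q n : tss_interior M.+1 q -> n <= M.+1 ->
  kappa_n n (0 :: rcons q M.+2) = descents n 0 q /\
  beta_n n (0 :: rcons q M.+2) = long_descents n false 0 q.
Proof.
case/and3P=> _ q0 /eqP lq nM.
have p0 : path adj 0 (rcons q M.+2) by rewrite rcons_path q0 lq /adj eqxx.
have Mn : M.+2 != n by apply/eqP; lia.
by rewrite kappa_nE // beta_nE // descents_rcons // long_descents_rcons.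
Qed.

Lemma ktildeE M (k : 'I_M.+1 -> nat) (n : 'I_M.+1) :
  ktilde k n = if n < M then k (inord n.+1) else 0.
Proof.
rewrite /ktilde; move: (erefl (n.+1 < M.+1)); case: {2 3}(n.+1 < M.+1) => h.
  by rewrite -ltnS h; congr k; apply/val_inj; rewrite /= inordK.
by rewrite -ltnS h.
Qed.

Theorem lemma4 (M : nat) (k m : 'I_M.+1 -> nat) :
  (1 <= M)%N ->
  k ord0 = 0 ->
  (forall n : 'I_M.+1, m n <= k n /\ m n <= ktilde k n)%N ->
  exists s : seq (seq nat),
    [/\ uniq s,
        (forall p : seq nat,
            p \in s <->
            (is_tss M p /\
             forall n : 'I_M.+1, kappa_n n p = k n /\ beta_n n p = m n))
      & size s = (\prod_(n < M.+1) 'C(k n, m n)) * (\prod_(n < M.+1) 'C(ktilde k n, m n))].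
Proof.
move=> _ k0 _; pose K n := k (inord n); pose L n := m (inord n).
have K0 : K 0 = 0 by rewrite /K -[X in inord X]/(nat_of_ord (@ord0 M)) inord_val.
have memE q := mem_tss_interiors M L q K0.
exists [seq 0 :: rcons q M.+2 | q <- tss_interiors M K L]; split.
- by rewrite map_inj_uniq ?uniq_tss_interiors // => q1 q2 [] /rcons_inj [].
- move=> p; rewrite is_tssE; split.
    case/mapP=> q /memE[qa qst] ->; split; first by exists q.
    move=> n; have [-> ->] := kappa_beta_tss qa (leqW (ltn_ord n)).
    by have := qst n (ltn_ord n); rewrite /K /L inord_val.
  case=> -[q -> qa] st; apply/mapP; exists q => //; apply/memE; split=> // n nM.
  have := st (inord n); have [-> ->] := kappa_beta_tss qa (leqW (leq_ord (inord n))).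
  by rewrite (inordK nM).
- rewrite size_map size_tss_interiors big_split /=; congr (_ * _); apply: eq_bigr => i _.
    by rewrite /K /L inord_val.
  by rewrite ktildeE /K /L inord_val.
Qed.
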